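(* In the variety of nonempty sets, a nonempty set $G$ is geometrically stable if and only if $|G|=1$.
   Context: Regard nonempty sets as left $S$-acts over the trivial monoid $S=\{1\}$: the free object on a nonempty finite set $X$ is $X$, homomorphisms are arbitrary maps, congruences are equivalence relations. For a set $G$ and a set $A$ of maps $X\to G$, let $A'=\bigcap_{\mu\in A}\ker\mu$ (empty intersection $=X\times X$), where $\ker\mu=\{(x,y):\mu(x)=\mu(y)\}$; for a relation $T\subseteq X\times X$ let $T'_G=\{\mu:X\to G: T\subseteq\ker\mu\}$; and $A''=(A')'_G$. A set $A$ of maps $X\to G$ is an algebraic variety if $A=T'_G$ for some relation $T$ on $X$. $G$ is geometrically stable iff for every nonempty finite set $X$ and all algebraic varieties $A,B$ of maps $X\to G$, one has $(A\cup B)''=A\cup B$. *)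

From mathcomp Require Import all_boot.
Set Implicit Arguments. Unset Strict Implicit. Unset Printing Implicit Defensive.

(* Nonempty sets as acts over the trivial monoid: homomorphisms X -> G are
   arbitrary maps, congruences are equivalence relations. *)

Section Galois.
Variables (X : Type) (G : Type).

Definition kerm (mu : X -> G) : X -> X -> Prop := fun x y => mu x = mu y.

Definition primeA (A : (X -> G) -> Prop) : X -> X -> Prop :=
  fun x y => forall mu, A mu -> kerm mu x y.

Definition primeT (T : X -> X -> Prop) : (X -> G) -> Prop :=
  fun mu => forall x y, T x y -> kerm mu x y.

Definition dprime (A : (X -> G) -> Prop) : (X -> G) -> Prop := primeT (primeA A).

Definition seteq (A B : (X -> G) -> Prop) : Prop := forall mu, A mu <-> B mu.

Definition setU (A B : (X -> G) -> Prop) : (X -> G) -> Prop :=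
  fun mu => A mu \/ B mu.

Definition algebraic_variety (A : (X -> G) -> Prop) : Prop :=
  exists T : X -> X -> Prop, seteq A (primeT T).

End Galois.

Definition geometrically_stable (G : Type) : Prop :=
  forall (X : finType), 0 < #|X| ->
  forall A B : (X -> G) -> Prop,
    algebraic_variety A -> algebraic_variety B ->
    seteq (dprime (setU A B)) (setU A B).

(* If G is a singleton, every variety is the set of all maps, so nothing can
   be added by closure.  If G has two elements g0 <> h, take X = {0,1,2}, the
   variety A of maps identifying 0 with 1 and the variety B of maps
   identifying 1 with 2.  The maps (g0,g0,h) in A and (h,g0,g0) in B already
   separate all points of X, so (A u B)' is the diagonal and (A u B)'' is
   everything; but (g0,h,g0) lies in neither A nor B. *)
From Pilot Require Import Defs.
From mathcomp Require Import all_boot.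
From Stdlib Require Import Classical_Prop.

Set Implicit Arguments.
Unset Strict Implicit.
Unset Printing Implicit Defensive.

Section GaloisClosure.
Variables (X G : Type).

Lemma dprime_ext (A : (X -> G) -> Prop) (mu : X -> G) : A mu -> dprime A mu.
Proof. by move=> Amu x y; apply. Qed.

Lemma dprime_full (A : (X -> G) -> Prop) (mu : X -> G) :
  (forall x y, primeA A x y -> x = y) -> dprime A mu.
Proof. by move=> sepA x y /sepA ->. Qed.

Lemma primeT_singleton (g : G) (T : X -> X -> Prop) (mu : X -> G) :
  (forall h : G, h = g) -> primeT T mu.
Proof. by move=> Gg x y _; rewrite /kerm (Gg (mu x)) (Gg (mu y)). Qed.

End GaloisClosure.

Section TwoPointCounterexample.
Variables (G : Type) (g0 h : G).
Hypothesis g0h : g0 <> h.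

Let chi (b : bool) : G := if b then h else g0.

Lemma chi_inj : injective chi.
Proof. by case; case=> // /esym. Qed.

Definition rel01 (x y : 'I_3) : Prop := val x = 0 /\ val y = 1.
Definition rel12 (x y : 'I_3) : Prop := val x = 1 /\ val y = 2.

Let V : ('I_3 -> G) -> Prop := Defs.setU (primeT rel01) (primeT rel12).

Lemma union_separates (x y : 'I_3) : primeA V x y -> x = y.
Proof.
move=> kerV.
have e2 : (val x == 2) = (val y == 2).
  apply: chi_inj; apply: (kerV (fun z => chi (val z == 2))).
  by left => a b [ea eb]; rewrite /kerm ea eb.
have e0 : (val x == 0) = (val y == 0).
  apply: chi_inj; apply: (kerV (fun z => chi (val z == 0))).
  by right => a b [ea eb]; rewrite /kerm ea eb.
apply: val_inj; move: e0 e2; clear kerV.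
by case: x => [[|[|[|?]]] ?]; case: y => [[|[|[|?]]] ?].
Qed.

Lemma middle_not_in_union : ~ V (fun x => chi (val x == 1)).
Proof.
case=> kerV.
- exact: g0h (kerV (@Ordinal 3 0 isT) (@Ordinal 3 1 isT) (conj erefl erefl)).
- apply/g0h/esym; exact: (kerV (@Ordinal 3 1 isT) (@Ordinal 3 2 isT) (conj erefl erefl)).
Qed.

Lemma not_geometrically_stable : ~ geometrically_stable G.
Proof.
move=> stable.
have var01 : algebraic_variety (primeT (G := G) rel01) by exists rel01.
have var12 : algebraic_variety (primeT (G := G) rel12) by exists rel12.
have card3 : 0 < #|'I_3| by rewrite card_ord.
have [closed _] := stable _ card3 _ _ var01 var12 (fun x => chi (val x == 1)).
exact/middle_not_in_union/closed/dprime_full/union_separates.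
Qed.

End TwoPointCounterexample.

Theorem proposition2p4 (G : Type) (g0 : G) :
  geometrically_stable G <-> exists g : G, forall h : G, h = g.
Proof.
split.
- move=> stable; exists g0 => h; apply: NNPP => hg0.
  by apply: (not_geometrically_stable (g0 := g0) (h := h)) => // /esym.
- case=> g Gg X _ A B [T defA] _ mu; split=> [_ | ].
  + by left; apply/defA; exact: primeT_singleton Gg.
  + exact: dprime_ext.
Qed.
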